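(* Let $G$ be a group, let $A=\bigoplus_{g\in G}A_g$ and $B=\bigoplus_{g\in G}B_g$ be $G$-graded rings, and let $\phi\colon A\to B$ be a surjective ring homomorphism with $\phi(A_g)\subseteq B_g$ for all $g\in G$. If $A$ is epsilon-strongly $G$-graded, then $B$ is epsilon-strongly $G$-graded.
   Context: Rings are associative, not necessarily unital; $XY$ denotes finite sums of products. A $G$-grading: $S=\bigoplus_gS_g$, $S_gS_h\subseteq S_{gh}$. The grading is epsilon-strong if $S_gS_{g^{-1}}S_g=S_g$ for all $g$ and each ring $S_gS_{g^{-1}}$ has a multiplicative identity element. *)

From HB Require Import structures.
From mathcomp Require Import all_boot all_algebra.
From Stdlib Require Import List.
Set Implicit Arguments. Unset Strict Implicit. Unset Printing Implicit Defensive.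
Import GRing.Theory.
Local Open Scope ring_scope.

Definition is_group (G : Type) (op : G -> G -> G) (e : G) (inv : G -> G) : Prop :=
  [/\ forall a b c, op a (op b c) = op (op a b) c,
      forall a, op e a = a /\ op a e = a &
      forall a, op (inv a) a = e /\ op a (inv a) = e].

Definition is_rng (R : zmodType) (mul : R -> R -> R) : Prop :=
  [/\ forall x y z, mul x (mul y z) = mul (mul x y) z,
      forall x y z, mul (x + y) z = mul x z + mul y z &
      forall x y z, mul x (y + z) = mul x y + mul x z].

Definition is_addsubgroup (R : zmodType) (X : R -> Prop) : Prop :=
  X 0 /\ forall x y, X x -> X y -> X (x - y).

Definition is_grading (G : Type) (op : G -> G -> G) (R : zmodType)
    (mul : R -> R -> R) (S : G -> R -> Prop) : Prop :=
  [/\ forall g, is_addsubgroup (S g),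
      forall x : R, exists (s : list G) (f : G -> R),
        (forall g, S g (f g)) /\ x = \sum_(g <- s) f g,
      forall (s : list G) (f : G -> R), NoDup s -> (forall g, S g (f g)) ->
        \sum_(g <- s) f g = 0 -> forall g, In g s -> f g = 0 &
      forall g h x y, S g x -> S h y -> S (op g h) (mul x y)].

Definition setmul (R : zmodType) (mul : R -> R -> R) (X Y : R -> Prop) : R -> Prop :=
  fun z => exists s : list (R * R),
    (forall p, In p s -> X p.1 /\ Y p.2) /\ z = \sum_(p <- s) mul p.1 p.2.

Definition epsilon_strong (G : Type) (inv : G -> G) (R : zmodType)
    (mul : R -> R -> R) (S : G -> R -> Prop) : Prop :=
  forall g,
    (forall z, setmul mul (setmul mul (S g) (S (inv g))) (S g) z <-> S g z) /\
    exists e, setmul mul (S g) (S (inv g)) e /\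
      forall x, setmul mul (S g) (S (inv g)) x -> mul e x = x /\ mul x e = x.

From HB Require Import structures.
From mathcomp Require Import all_boot all_algebra.
From Stdlib Require Import List ClassicalEpsilon.
Set Implicit Arguments. Unset Strict Implicit. Unset Printing Implicit Defensive.
Local Open Scope ring_scope.
Import GRing.Theory.

(* The only real work is lifting: every homogeneous element of [B] of degree
   [g] is the image of a homogeneous element of [A] of degree [g].  Indeed,
   lift [b] to some [a], decompose [a] into homogeneous components, and
   compare degree-[g] components in the direct sum [B].  Hence [phi] maps
   [A_g A_{g^-1}] onto [B_g B_{g^-1}] and [A_g] onto [B_g], so the image of the
   unit of [A_g A_{g^-1}] is a unit of [B_g B_{g^-1}], and
   [B_g = phi (A_g A_{g^-1} A_g) \subseteq B_g B_{g^-1} B_g \subseteq B_g]. *)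

Section AddSubgroup.

Variables (R : zmodType) (X : R -> Prop).
Hypothesis X_addsub : is_addsubgroup X.

Lemma addsub0 : X 0.
Proof. by case: X_addsub. Qed.

Lemma addsubD x y : X x -> X y -> X (x + y).
Proof.
case: X_addsub => X0 XB Xx Xy; rewrite -[y]opprK -[- y]add0r.
by apply: (XB) => //; apply: XB.
Qed.

Lemma addsub_sum (I : Type) (s : list I) (F : I -> R) :
  (forall i, In i s -> X (F i)) -> X (\sum_(i <- s) F i).
Proof.
elim: s => [|i s IHs] XF; first by rewrite big_nil; apply: addsub0.
rewrite big_cons; apply: addsubD; first by apply: XF; left.
by apply: IHs => j sj; apply: XF; right.
Qed.

End AddSubgroup.

(* The index type carries no decidable equality, so the point mass is
   defined classically. *)
Definition single (I : Type) (R : zmodType) (i : I) (x : R) (j : I) : R :=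
  if excluded_middle_informative (j = i) then x else 0.

Lemma single_id (I : Type) (R : zmodType) (i : I) (x : R) : single i x i = x.
Proof. by rewrite /single; case: excluded_middle_informative. Qed.

Lemma sum_single_notin (I : Type) (R : zmodType) (t : list I) i (x : R) :
  ~ In i t -> \sum_(j <- t) single i x j = 0.
Proof.
elim: t => [|j t IHt] ti; first by rewrite big_nil.
rewrite big_cons IHt => [|tj]; last by apply: ti; right.
rewrite /single; case: excluded_middle_informative => [ji|nji]; last by rewrite addr0.
by case: ti; left.
Qed.

Lemma sum_single (I : Type) (R : zmodType) (t : list I) i (x : R) :
  NoDup t -> In i t -> \sum_(j <- t) single i x j = x.
Proof.
elim: t => [|j t IHt] t_uniq ti; first by case: ti.
move: t_uniq => /NoDup_cons_iff[tj t_uniq].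
rewrite big_cons {1}/single; case: excluded_middle_informative => [ji|nji] /=.
  by rewrite -ji sum_single_notin ?addr0.
by rewrite add0r IHt //; case: ti.
Qed.

Section HomogeneousDecomposition.

Variables (G : Type) (R : zmodType) (S : G -> R -> Prop).
Hypothesis S_addsub : forall g, is_addsubgroup (S g).

Lemma single_homogeneous g x h : S g x -> S h (single g x h).
Proof.
rewrite /single; case: excluded_middle_informative => [hg|ngh] /=; first by rewrite hg.
by move=> _; apply: addsub0.
Qed.

Lemma homogeneous_sum_insert (t : list G) (k : G -> R) g x :
  NoDup t -> (forall h, S h (k h)) -> S g x ->
  exists t' k', [/\ NoDup t', incl (g :: t) t', forall h, S h (k' h) &
    \sum_(h <- t') k' h = x + \sum_(h <- t) k h].
Proof.
move=> t_uniq Sk Sx; case: (classic (In g t)) => [tg | tNg].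
  exists t, (fun h => k h + single g x h); split=> //.
  - by move=> h [<-|].
  - by move=> h; apply: addsubD => //; apply: single_homogeneous.
  - by rewrite big_split /= sum_single // addrC.
have Sxk : S g (x - k g) by case: (S_addsub g) => _; apply.
exists (g :: t), (fun h => k h + single g (x - k g) h); split.
- exact: NoDup_cons.
- exact: incl_refl.
- by move=> h; apply: addsubD => //; apply: single_homogeneous.
rewrite big_cons big_split /= sum_single_notin // single_id.
by rewrite addr0 [k g + _]addrC subrK.
Qed.

Lemma homogeneous_decomposition g (s : list G) (f : G -> R) :
  (forall h, S h (f h)) ->
  exists t k, [/\ NoDup t, In g t, forall h, S h (k h) &
    \sum_(h <- s) f h = \sum_(h <- t) k h].
Proof.
move=> Sf; elim: s => [|h s [t [k [t_uniq tg Sk sum_s]]]].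
  have S0 h : S h 0 by apply: addsub0.
  have [t [k [t_uniq gt Sk sum_t]]] :=
    homogeneous_sum_insert (k := fun=> 0) (NoDup_nil G) S0 (S0 g).
  exists t, k; split=> //; first by apply: gt; left.
  by rewrite sum_t !big_nil addr0.
have [t' [k' [t'_uniq htt' Sk' sum_t']]] := homogeneous_sum_insert t_uniq Sk (Sf h).
exists t', k'; split=> //; first by apply: htt'; right.
by rewrite big_cons sum_s sum_t'.
Qed.

Hypothesis S_direct : forall (t : list G) (k : G -> R), NoDup t ->
  (forall g, S g (k g)) -> \sum_(g <- t) k g = 0 -> forall g, In g t -> k g = 0.

Lemma homogeneous_component (t : list G) (k : G -> R) g x :
  NoDup t -> In g t -> (forall h, S h (k h)) -> S g x ->
  \sum_(h <- t) k h = x -> k g = x.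
Proof.
move=> t_uniq tg Sk Sx sum_k.
have Sd h : S h (k h - single g x h).
  by case: (S_addsub h) => _; apply; last by apply: single_homogeneous.
have sum_d : \sum_(h <- t) (k h - single g x h) = 0.
  by rewrite sumrB sum_single // sum_k subrr.
by have /eqP := S_direct t_uniq Sd sum_d tg; rewrite single_id subr_eq0 => /eqP.
Qed.

End HomogeneousDecomposition.

Section SetMul.

Variables (R : zmodType) (mul : R -> R -> R).

Lemma setmul0 X Y : setmul mul X Y 0.
Proof. by exists nil; rewrite big_nil. Qed.

Lemma setmul_cons (X Y : R -> Prop) x y z :
  X x -> Y y -> setmul mul X Y z -> setmul mul X Y (mul x y + z).
Proof.
move=> Xx Yy [s [XYs ->]]; exists ((x, y) :: s); rewrite big_cons.
by split=> // p [<-|]; [split | apply: XYs].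
Qed.

Lemma setmul_homogeneous (G : Type) (op : G -> G -> G) (S : G -> R -> Prop)
    (X Y : R -> Prop) g h :
  (forall g, is_addsubgroup (S g)) ->
  (forall g h x y, S g x -> S h y -> S (op g h) (mul x y)) ->
  (forall x, X x -> S g x) -> (forall y, Y y -> S h y) ->
  forall z, setmul mul X Y z -> S (op g h) z.
Proof.
move=> S_addsub S_mul SX SY z [s [XYs ->]]; apply: addsub_sum => // p sp.
by case: (XYs p sp) => Xp Yp; apply: S_mul; [apply: SX | apply: SY].
Qed.

End SetMul.

Section AdditiveImage.

Variables (A B : zmodType) (phi : A -> B).
Hypothesis phiD : {morph phi : x y / x + y}.

Lemma additive_phi0 : phi 0 = 0.
Proof. by apply: (@addrI _ (phi 0)); rewrite -phiD !addr0. Qed.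

HB.instance Definition _ := GRing.isNmodMorphism.Build A B phi (additive_phi0, phiD).

Lemma homogeneous_lift (G : Type) (SA : G -> A -> Prop) (SB : G -> B -> Prop) :
  (forall g, is_addsubgroup (SA g)) ->
  (forall x : A, exists (s : list G) (f : G -> A),
     (forall g, SA g (f g)) /\ x = \sum_(g <- s) f g) ->
  (forall g, is_addsubgroup (SB g)) ->
  (forall (t : list G) (k : G -> B), NoDup t -> (forall g, SB g (k g)) ->
     \sum_(g <- t) k g = 0 -> forall g, In g t -> k g = 0) ->
  (forall b, exists a, phi a = b) ->
  (forall g a, SA g a -> SB g (phi a)) ->
  forall g b, SB g b -> exists a, SA g a /\ phi a = b.
Proof.
move=> SA_addsub SA_gen SB_addsub SB_direct phi_surj phi_deg g b SBb.
have [a phi_a] := phi_surj b; have [s [f [SAf a_s]]] := SA_gen a.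
have [t [k [t_uniq tg SAk s_t]]] := homogeneous_decomposition SA_addsub g s SAf.
exists (k g); split=> //.
apply: (homogeneous_component SB_addsub SB_direct (k := phi \o k) t_uniq tg) => //= [h|].
  exact: phi_deg.
by rewrite -raddf_sum -s_t -a_s.
Qed.

Variables (mulA : A -> A -> A) (mulB : B -> B -> B).
Hypothesis phiM : {morph phi : x y / mulA x y >-> mulB x y}.

Lemma setmul_image (X Y : A -> Prop) (X' Y' : B -> Prop) z :
  (forall x, X x -> X' (phi x)) -> (forall y, Y y -> Y' (phi y)) ->
  setmul mulA X Y z -> setmul mulB X' Y' (phi z).
Proof.
move=> XX' YY' [s [XYs ->]]; exists (map (fun p => (phi p.1, phi p.2)) s); split.
  by move=> _ /in_map_iff[p [<- /XYs[Xp Yp]]]; split; [apply: XX' | apply: YY'].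
by rewrite big_map raddf_sum; apply: eq_bigr => p _; apply: phiM.
Qed.

Lemma setmul_lift (X Y : A -> Prop) (X' Y' : B -> Prop) z' :
  (forall x', X' x' -> exists x, X x /\ phi x = x') ->
  (forall y', Y' y' -> exists y, Y y /\ phi y = y') ->
  setmul mulB X' Y' z' -> exists z, setmul mulA X Y z /\ phi z = z'.
Proof.
move=> liftX liftY [s [XYs ->]]; elim: s XYs => [|p s IHs] XYs.
  by exists 0; rewrite additive_phi0 big_nil; split=> //; apply: setmul0.
rewrite big_cons; have [|z [XYz <-]] := IHs; first by move=> q sq; apply: XYs; right.
have [/liftX[x [Xx <-]] /liftY[y [Yy <-]]] := XYs p (or_introl erefl).
by exists (mulA x y + z); rewrite phiD phiM; split=> //; apply: setmul_cons.
Qed.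

End AdditiveImage.

Lemma group_mulgVK (G : Type) (op : G -> G -> G) (e : G) (inv : G -> G) g :
  is_group op e inv -> op (op g (inv g)) g = g.
Proof. by case=> mulgA mulg1 mulVg; rewrite -mulgA (proj1 (mulVg g)) (proj2 (mulg1 g)). Qed.

Theorem lemma3p10
  (G : Type) (gop : G -> G -> G) (ge : G) (ginv : G -> G)
  (HG : is_group gop ge ginv)
  (A B : zmodType) (mulA : A -> A -> A) (mulB : B -> B -> B)
  (HA : is_rng mulA) (HB : is_rng mulB)
  (SA : G -> A -> Prop) (SB : G -> B -> Prop)
  (HSA : is_grading gop mulA SA) (HSB : is_grading gop mulB SB)
  (phi : A -> B)
  (phi_add : forall x y, phi (x + y) = phi x + phi y)
  (phi_mul : forall x y, phi (mulA x y) = mulB (phi x) (phi y))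
  (phi_surj : forall b, exists a, phi a = b)
  (phi_deg : forall g a, SA g a -> SB g (phi a)) :
  epsilon_strong ginv mulA SA -> epsilon_strong ginv mulB SB.
Proof.
case: HSA => SA_addsub SA_gen _ _; case: HSB => SB_addsub _ SB_direct SB_mul.
have lift := homogeneous_lift phi_add SA_addsub SA_gen SB_addsub SB_direct phi_surj phi_deg.
have phi_setmul g h z :
    setmul mulA (SA g) (SA h) z -> setmul mulB (SB g) (SB h) (phi z).
  exact: (setmul_image phi_add phi_mul (phi_deg g) (phi_deg h)).
move=> epsA g; have [SA_triple [u [SAu u_unit]]] := epsA g; split=> [z|].
  split=> [SBz | /lift[a [/SA_triple SAa <-]]].
    rewrite -(group_mulgVK g HG).
    apply: (setmul_homogeneous SB_addsub SB_mul _ _ SBz) => // x.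
    exact: (setmul_homogeneous SB_addsub SB_mul).
  exact: (setmul_image phi_add phi_mul (phi_setmul g (ginv g)) (phi_deg g) SAa).
exists (phi u); split; first exact: phi_setmul.
move=> y /(setmul_lift phi_add phi_mul (lift g) (lift (ginv g)))[x [/u_unit[ux xu] <-]].
by rewrite -!phi_mul ux xu.
Qed.
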